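(* Let $p\ne q$ be primes, $G=\mathbb{Z}_p^2\times\mathbb{Z}_q^2$, and let $S\subseteq G$ be spectral with $\gcd(|S|,p^2q^2)=pq$ and $pq<|S|<pq\min\{p,q\}$. Then for every nonzero $u\in\mathbb{Z}_p^2$ there is $x_u\in\mathbb{Z}_q^2$ with $\chi_{u+x_u}(S)=0$, and for every nonzero $v\in\mathbb{Z}_q^2$ there is $y_v\in\mathbb{Z}_p^2$ with $\chi_{v+y_v}(S)=0$.
   Context: Elements of $G$ are written $a+b$ with $a\in\mathbb{Z}_p^2$, $b\in\mathbb{Z}_q^2$. For $w=u+v$ define $\chi_w(a+b)=\exp\big(2\pi i(\tfrac{u\cdot a}{p}+\tfrac{v\cdot b}{q})\big)$ and $\chi(S)=\sum_{s\in S}\chi(s)$. $S$ is spectral if there is $\Lambda\subseteq G$ with $|\Lambda|=|S|$ and $\chi_{\lambda-\lambda'}(S)=0$ for all distinct $\lambda,\lambda'\in\Lambda$. *)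

From mathcomp Require Import all_boot all_order all_algebra.
From mathcomp Require Import reals trigo Rstruct.
From mathcomp Require Import complex.
Import GRing.Theory Num.Theory.
Set Implicit Arguments. Unset Strict Implicit. Unset Printing Implicit Defensive.
Local Open Scope ring_scope.

(* G = Z_p^2 x Z_q^2 ; an element a + b is the pair (a, b). *)
Definition Gp (p q : nat) : finType := (('Z_p * 'Z_p) * ('Z_q * 'Z_q))%type.

Definition cexp2pi (x : Rdefinitions.R) : Rdefinitions.R[i] :=
  (cos (2 * pi * x) +i* sin (2 * pi * x))%C.

Definition dotn (n : nat) (u a : 'Z_n * 'Z_n) : nat :=
  (val u.1 * val a.1 + val u.2 * val a.2)%N.

Definition chi (p q : nat) (w g : Gp p q) : Rdefinitions.R[i] :=
  cexp2pi ((dotn w.1 g.1)%:R / p%:R + (dotn w.2 g.2)%:R / q%:R).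

Definition chiS (p q : nat) (w : Gp p q) (S : {set Gp p q}) : Rdefinitions.R[i] :=
  \sum_(s in S) chi w s.

Definition spectral (p q : nat) (S : {set Gp p q}) : Prop :=
  exists Lam : {set Gp p q}, #|Lam| = #|S| /\
    {in Lam &, forall l l' : Gp p q, l != l' -> chiS (l - l') S = 0}.

(* Fix u != 0 in Z_p^2 and a spectrum L of S. Since |L| = |S| > pq, some
   value of det(u, l.1) in Z_p is taken by more than q points of L, whose
   Z_p-parts then pairwise differ by multiples of u. If two of them have
   distinct Z_p-parts, their difference is c u + x with c != 0, and the Galois
   automorphism of Q(zeta_pq) that multiplies Z_p-frequencies by 1/c turns
   chi_{c u + x}(S) = 0 into chi_{u + x'}(S) = 0. Otherwise their Z_q-parts form
   a set B of more than q points of Z_q^2; the same pigeonhole shows that every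
   nonzero e in Z_q^2 is a multiple of a difference of B, so chi_e(S) = 0 for
   all e != 0 in Z_q^2, and Fourier inversion on Z_q^2 gives q^2 | |S|,
   contradicting gcd(|S|, p^2 q^2) = pq. The second claim is the first one for
   Z_q^2 x Z_p^2. *)

From mathcomp Require Import all_boot all_order all_algebra.
From mathcomp Require Import algC cyclotomic.
From mathcomp Require Import reals trigo Rstruct complex.
From mathcomp Require Import ring lra.
Import Order.TTheory GRing.Theory Num.Theory trigo.
Set Implicit Arguments.
Unset Strict Implicit.
Unset Printing Implicit Defensive.
Local Open Scope ring_scope.

Lemma map_ratr_Cyclotomic (K : numFieldType) n :
  map_poly (ratr : rat -> K) (map_poly intr 'Phi_n) = map_poly intr 'Phi_n.
Proof. by rewrite -map_poly_comp; apply: eq_map_poly => x /=; rewrite ratr_int. Qed.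

Section CyclotomicGalois.
Variable F : numFieldType.

Lemma Xn_sub1_prod_Cyclotomic n (w : F) : (0 < n)%N ->
  (w ^+ n - 1) = \prod_(d <- divisors n) (map_poly intr 'Phi_d).[w].
Proof.
move=> n_gt0; rewrite -horner_prod -rmorph_prod /= prod_Cyclotomic //.
by rewrite rmorphB rmorph1 /= map_polyXn !hornerE.
Qed.

Lemma root_Cyclotomic n (w : F) :
  n.-primitive_root w -> root (map_poly intr 'Phi_n) w.
Proof.
move=> prim_w; have n_gt0 := prim_order_gt0 prim_w.
have /eqP := Xn_sub1_prod_Cyclotomic w n_gt0.
rewrite prim_expr_order // subrr eq_sym prodf_seq_eq0 => /hasP[d].
rewrite -dvdn_divisors // => d_dvd_n /= root_d.
have d_gt0 := dvdn_gt0 n_gt0 d_dvd_n.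
suff -> : n = d by [].
apply/eqP; rewrite eqn_leq (dvdn_leq n_gt0 d_dvd_n) andbT.
have := dvdn_leq d_gt0; apply; rewrite (prim_order_dvd prim_w) -subr_eq0.
rewrite Xn_sub1_prod_Cyclotomic // prodf_seq_eq0.
by apply/hasP; exists d; rewrite -?dvdn_divisors.
Qed.

(* The minimal polynomial of a primitive n-th root of unity over Q is 'Phi_n:
   this is proved in algC, to which we reduce through a common root of
   gcd(P, 'Phi_n). *)
Lemma Cyclotomic_dvdp n (w : F) (P : {poly rat}) : n.-primitive_root w ->
  root (map_poly ratr P) w -> map_poly intr 'Phi_n %| P.
Proof.
move=> prim_w rootP; have n_gt0 := prim_order_gt0 prim_w.
have Phi_neq0 : map_poly intr 'Phi_n != 0 :> {poly rat}.
  exact/monic_neq0/monic_map/Cyclotomic_monic.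
set g := gcdp P (map_poly intr 'Phi_n).
have root_g : root (map_poly (ratr : rat -> F) g) w.
  by rewrite gcdp_map root_gcd rootP map_ratr_Cyclotomic root_Cyclotomic.
have size_g : (1 < size g)%N.
  rewrite -(size_map_poly (ratr : {rmorphism rat -> F})).
  by apply: root_size_gt1 root_g; rewrite map_poly_eq0 gcdp_eq0 negb_and Phi_neq0 orbT.
have [r root_r] : exists r : algC, root (map_poly ratr g) r.
  by apply/closed_rootP; rewrite size_map_poly neq_ltn size_g orbT.
have [z prim_z] := C_prim_root_exists n_gt0.
have prim_r : n.-primitive_root r.
  rewrite -(root_cyclotomic prim_z) -(Cintr_Cyclotomic prim_z) -map_ratr_Cyclotomic.
  have /dvdpP[h ->] : g %| map_poly intr 'Phi_n by apply: dvdp_gcdr.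
  by rewrite rmorphM rootM root_r orbT.
have [pf [Dpf _] min_pf] := minCpolyP r.
suff <- : pf = map_poly intr 'Phi_n.
  by apply: (dvdp_trans _ (dvdp_gcdl P (map_poly intr 'Phi_n))); rewrite -min_pf.
apply: (map_inj_poly (fmorph_inj (ratr : {rmorphism rat -> algC})) (rmorph0 _)).
by rewrite -Dpf map_ratr_Cyclotomic (minCpoly_cyclotomic prim_r) (Cintr_Cyclotomic prim_r).
Qed.

Lemma sum_prim_root_exp_coprime (T : finType) (A : {pred T}) (E : T -> nat) n k (w : F) :
  n.-primitive_root w -> coprime k n ->
  \sum_(i in A) w ^+ E i = 0 -> \sum_(i in A) (w ^+ k) ^+ E i = 0.
Proof.
move=> prim_w co_kn sum0.
set P : {poly rat} := \sum_(i in A) 'X^(E i).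
have P_horner x : (map_poly (ratr : rat -> F) P).[x] = \sum_(i in A) x ^+ E i.
  by rewrite rmorph_sum horner_sum; apply: eq_bigr => i _; rewrite /= map_polyXn hornerXn.
have /dvdpP[Q DQ] : map_poly intr 'Phi_n %| P.
  by apply: (Cyclotomic_dvdp prim_w); rewrite rootE P_horner sum0.
rewrite -P_horner DQ rmorphM hornerM /= map_ratr_Cyclotomic.
have /eqP -> : root (map_poly intr 'Phi_n) (w ^+ k).
  by apply: root_Cyclotomic; rewrite prim_root_exp_coprime.
by rewrite mulr0.
Qed.
End CyclotomicGalois.

Notation R := Rdefinitions.R.

Lemma cexp2piD (x y : R) : cexp2pi (x + y) = cexp2pi x * cexp2pi y.
Proof. by rewrite /cexp2pi mulrDr cosD sinD; simpc; rewrite [_ * sin _ + _]addrC. Qed.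

Lemma cexp2pi0 : cexp2pi 0 = 1.
Proof. by rewrite /cexp2pi mulr0 cos0 sin0. Qed.

Lemma cexp2pi1 : cexp2pi 1 = 1.
Proof. by rewrite /cexp2pi mulr1 mulr_natl cos2pi sin2pi. Qed.

Lemma cexp2piMn (x : R) m : cexp2pi (x *+ m) = cexp2pi x ^+ m.
Proof.
elim: m => [|m IHm]; first by rewrite mulr0n cexp2pi0.
by rewrite mulrS cexp2piD IHm exprS.
Qed.

(* sin (2 pi x) is positive for x < 1/2 and negative for x > 1/2, and cos pi = -1. *)
Lemma cexp2pi_neq1 (x : R) : 0 < x < 1 -> cexp2pi x != 1.
Proof.
case/andP => x_gt0 x_lt1; apply/negP => /eqP [] cos1 sin0.
have pi_gt0 : 0 < pi :> R := pi_gt0 R.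
have [lt_pi|gt_pi|eq_pi] := ltrgtP (2 * pi * x) pi.
- have : 0 < sin (2 * pi * x) by apply: sin_gt0_pi; rewrite lt_pi !mulr_gt0.
  by rewrite sin0 ltxx.
- have : 0 < sin (2 * pi * x - pi).
    by apply: sin_gt0_pi; rewrite subr_gt0 gt_pi /= ltrBlDr; nra.
  have := sinDpi (2 * pi * x - pi); rewrite subrK sin0 => /esym/eqP.
  by rewrite oppr_eq0 => /eqP ->; rewrite ltxx.
- move: cos1; rewrite eq_pi cospi => /eqP.
  by rewrite -subr_eq0 -opprD oppr_eq0 -(natrD _ 1 1) pnatr_eq0.
Qed.

Definition zeta (n : nat) : R[i] := cexp2pi n%:R^-1.

Lemma zetaX n m : zeta n ^+ m = cexp2pi (m%:R / n%:R).
Proof. by rewrite /zeta -cexp2piMn mulrC mulr_natr. Qed.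

Lemma zeta_prim_root n : (0 < n)%N -> n.-primitive_root (zeta n).
Proof.
move=> n_gt0; apply/andP; split => //; apply/forallP => i; apply/eqP.
rewrite unity_rootE zetaX.
have [->|ne_n] := eqVneq i.+1 n.
  by rewrite divff ?pnatr_eq0 -?lt0n // cexp2pi1 !eqxx.
apply/negbTE/cexp2pi_neq1.
have n_gt0' : 0 < n%:R :> R by rewrite ltr0n.
rewrite divr_gt0 ?ltr0n //= ltr_pdivrMr // mul1r ltr_nat ltn_neqAle ne_n.
exact: ltn_ord.
Qed.

Lemma zeta_expr_mod n i j : (0 < n)%N -> i = j %[mod n] -> zeta n ^+ i = zeta n ^+ j.
Proof.
by move=> n_gt0 eq_ij; apply/eqP; rewrite (eq_prim_root_expr (zeta_prim_root n_gt0)) eq_ij.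
Qed.

Lemma zetaMr m n : (0 < m)%N -> (0 < n)%N -> zeta (m * n) ^+ n = zeta m.
Proof.
move=> m_gt0 n_gt0; rewrite zetaX /zeta natrM; congr cexp2pi.
by rewrite invfM mulrCA divff ?mulr1 // pnatr_eq0 -lt0n.
Qed.

Lemma dotnD_mod n (u v a : 'Z_n * 'Z_n) : (1 < n)%N ->
  dotn (u + v) a = (dotn u a + dotn v a) %[mod n].
Proof.
move=> n_gt1; have modZp x : (x %% (Zp_trunc n).+2 = x %% n)%N by rewrite Zp_cast.
rewrite /dotn /= !modZp -modnDm !modnMml modnDm; congr (_ %% n)%N; ring.
Qed.

Lemma sum_expr_unity_root_eq0 (F : idomainType) (y : F) n :
  y ^+ n = 1 -> y != 1 -> \sum_(i < n) y ^+ i = 0.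
Proof.
move=> yn1 y_neq1; have /esym/eqP := subrX1 y n.
by rewrite yn1 subrr mulf_eq0 subr_eq0 (negbTE y_neq1) => /eqP.
Qed.

Lemma Zp_val_lt r (c : 'Z_r) : (1 < r)%N -> (val c < r)%N.
Proof. by move=> r_gt1; apply: (leq_trans (ltn_ord c)); rewrite Zp_cast. Qed.

Section Characters.
Variables p q : nat.
Hypotheses (p_gt1 : (1 < p)%N) (q_gt1 : (1 < q)%N).
Let p_gt0 : (0 < p)%N := ltnW p_gt1.
Let q_gt0 : (0 < q)%N := ltnW q_gt1.
Let pq_gt0 : (0 < p * q)%N. Proof. by rewrite muln_gt0 p_gt0. Qed.

Lemma chi_zetaE (w g : Gp p q) :
  chi w g = zeta p ^+ dotn w.1 g.1 * zeta q ^+ dotn w.2 g.2.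
Proof. by rewrite /chi cexp2piD !zetaX. Qed.

Lemma chi0 (g : Gp p q) : chi 0 g = 1.
Proof. by rewrite chi_zetaE /dotn /= !mul0n !expr0 mulr1. Qed.

Lemma chiD (w w' g : Gp p q) : chi (w + w') g = chi w g * chi w' g.
Proof.
rewrite !chi_zetaE (zeta_expr_mod p_gt0 (dotnD_mod _ _ _ p_gt1)).
rewrite (zeta_expr_mod q_gt0 (dotnD_mod _ _ _ q_gt1)) !exprD; ring.
Qed.

Lemma chiMn (w g : Gp p q) k : chi (w *+ k) g = chi w g ^+ k.
Proof. by elim: k => [|k IHk]; rewrite ?chi0 // mulrS chiD IHk exprS. Qed.

Lemma chi_prim_rootE (w g : Gp p q) :
  chi w g = zeta (p * q) ^+ (dotn w.1 g.1 * q + dotn w.2 g.2 * p).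
Proof.
have zeta_p a : zeta (p * q) ^+ (a * q) = zeta p ^+ a.
  by rewrite (mulnC a) exprM zetaMr.
have zeta_q b : zeta (p * q) ^+ (b * p) = zeta q ^+ b.
  by rewrite (mulnC b) exprM (mulnC p) zetaMr.
by rewrite chi_zetaE exprD zeta_p zeta_q.
Qed.

(* The sums chi_w(S) live in Q(zeta_pq), whose Galois automorphisms are the
   maps zeta_pq |-> zeta_pq ^ k with k coprime to pq. *)
Lemma chiS_mulrn_eq0 (w : Gp p q) (S : {set Gp p q}) k :
  coprime k (p * q) -> chiS w S = 0 -> chiS (w *+ k) S = 0.
Proof.
move=> co_k; rewrite /chiS; under eq_bigr do rewrite chi_prim_rootE.
move/(sum_prim_root_exp_coprime (zeta_prim_root pq_gt0) co_k).
by under eq_bigr do rewrite -exprAC -chi_prim_rootE -chiMn.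
Qed.

Lemma chi0l (e : 'Z_q * 'Z_q) (g : Gp p q) :
  chi ((0, e) : Gp p q) g = zeta q ^+ dotn e g.2.
Proof. by rewrite chi_zetaE /dotn /= !mul0n expr0 mul1r. Qed.

Lemma sum_Zp_zeta_expr (x : nat) : (x < q)%N ->
  \sum_(j : 'Z_q) zeta q ^+ (val j * x) = if x == 0%N then q%:R else 0.
Proof.
move=> x_lt_q.
rewrite -(big_mkord xpredT (fun j => zeta q ^+ (j * x))) Zp_cast // big_mkord.
have [->|x_neq0] := eqVneq x 0%N.
  by under eq_bigr do rewrite muln0 expr0; rewrite sumr_const card_ord.
under eq_bigr do rewrite mulnC exprM.
apply: sum_expr_unity_root_eq0.
  by rewrite exprAC (prim_expr_order (zeta_prim_root q_gt0)) expr1n.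
rewrite -(prim_order_dvd (zeta_prim_root q_gt0)); apply: contraTN x_lt_q => /dvdn_leq.
by rewrite -leqNgt lt0n x_neq0 => /(_ isT).
Qed.

Lemma sum_Zp2_zeta_dotn (b : 'Z_q * 'Z_q) :
  \sum_(e : 'Z_q * 'Z_q) zeta q ^+ dotn e b = if b == 0 then (q ^ 2)%:R else 0.
Proof.
rewrite -(pair_bigA _ (fun e1 e2 => zeta q ^+ dotn (e1, e2) b)) /=.
under eq_bigr do under eq_bigr do rewrite /dotn /= exprD.
rewrite -big_distrlr /= !sum_Zp_zeta_expr ?Zp_val_lt //.
case: b => b1 b2; rewrite xpair_eqE -!val_eqE /=.
by case: eqP; case: eqP; rewrite /= ?mulr0 ?mul0r // -natrM mulnn.
Qed.

Lemma vanishing_chiS_Zq_dvdn_card (S : {set Gp p q}) :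
  (forall e : 'Z_q * 'Z_q, e != 0 -> chiS ((0, e) : Gp p q) S = 0) ->
  (q ^ 2 %| #|S|)%N.
Proof.
move=> chiS_eq0; set S0 := [set s in S | s.2 == 0].
have sum_chiS : \sum_(e : 'Z_q * 'Z_q) chiS ((0, e) : Gp p q) S = #|S|%:R.
  rewrite (bigD1 (0 : _ * _)) //= big1 ?addr0 => [|e /chiS_eq0 //].
  rewrite /chiS (eq_bigr (fun _ => 1)) ?sumr_const // => s _.
  by rewrite chi0l /dotn !mul0n.
have : \sum_(e : 'Z_q * 'Z_q) chiS ((0, e) : Gp p q) S = (q ^ 2 * #|S0|)%:R.
  rewrite /chiS exchange_big /=; under eq_bigr do under eq_bigr do rewrite chi0l.
  under eq_bigr do rewrite sum_Zp2_zeta_dotn.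
  by rewrite -big_mkcondr sumr_const natrM mulr_natr -cardsE.
by rewrite sum_chiS => /eqP; rewrite eqr_nat => /eqP ->; apply: dvdn_mulr.
Qed.

End Characters.

Lemma exists_large_fiber (T Y : finType) (A : {set T}) (f : T -> Y) m :
  (#|Y| * m < #|A|)%N -> exists y, (m < #|[set x in A | f x == y]|)%N.
Proof.
move=> A_large; apply/existsP; apply: contraLR A_large => /existsPn small.
rewrite -leqNgt -sum1_card (partition_big f xpredT) //= -sum_nat_const.
apply: leq_sum => y _; have := small y; rewrite -leqNgt; apply: leq_trans.
by rewrite sum1dep_card cardsE.
Qed.

Section PlaneOverZp.
Variable r : nat.
Hypothesis r_prime : prime r.
Let r_gt1 : (1 < r)%N := prime_gt1 r_prime.
Let card_Zp_type m : (#|{: 'Z_r}| * m)%N = (r * m)%N.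
Proof. by rewrite card_ord Zp_cast. Qed.

Definition scale2 (c : 'Z_r) (a : 'Z_r * 'Z_r) : 'Z_r * 'Z_r := (c * a.1, c * a.2).

Definition det2 (u a : 'Z_r * 'Z_r) : 'Z_r := u.1 * a.2 - u.2 * a.1.

Lemma Zp_val_coprime (c : 'Z_r) : c != 0 -> coprime (val c) r.
Proof.
move=> c_neq0; rewrite coprime_sym prime_coprime //.
have c_gt0 : (0 < val c)%N.
  by rewrite lt0n; apply: contra c_neq0 => /eqP c0; apply/eqP/val_inj.
by apply: (contraL _ (Zp_val_lt c r_gt1)) => /(dvdn_leq c_gt0); rewrite -leqNgt.
Qed.

Lemma Zp_unit (c : 'Z_r) : c != 0 -> c \is a GRing.unit.
Proof. by move=> c_neq0; rewrite -(natr_Zp c) unitZpE // coprime_sym Zp_val_coprime. Qed.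

Lemma scale2_1 (a : 'Z_r * 'Z_r) : scale2 1 a = a.
Proof. by case: a => a1 a2; rewrite /scale2 !mul1r. Qed.

Lemma scale2K (c : 'Z_r) (a : 'Z_r * 'Z_r) : c != 0 -> scale2 c^-1 (scale2 c a) = a.
Proof. by move=> c_neq0; case: a => a1 a2; rewrite /scale2 /= !mulKr ?Zp_unit. Qed.

Lemma scale2_mulrn (c : 'Z_r) (a : 'Z_r * 'Z_r) k :
  k = val c %[mod r] -> scale2 c a = a *+ k.
Proof.
move=> k_mod; rewrite pairMnE /scale2.
suff -> : c = k%:R by rewrite !mulr_natl.
by rewrite -(Zp_nat_mod r_gt1 k) k_mod (Zp_nat_mod r_gt1) natr_Zp.
Qed.

Lemma det2B (u a b : 'Z_r * 'Z_r) : det2 u (a - b) = det2 u a - det2 u b.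
Proof. by case: a b => [a1 a2] [b1 b2]; rewrite /det2 /=; ring. Qed.

Lemma det2_eq0_scale2 (u a : 'Z_r * 'Z_r) :
  u != 0 -> det2 u a = 0 -> exists c, a = scale2 c u.
Proof.
case: u a => u1 u2 [a1 a2]; rewrite /det2 /scale2 /= => u_neq0 /eqP.
rewrite subr_eq0 => /eqP det0.
have [u1_eq0|u1_neq0] := eqVneq u1 0.
  have u2_unit : u2 \is a GRing.unit.
    by apply: Zp_unit; apply: contra u_neq0 => /eqP->; rewrite u1_eq0.
  exists (a2 / u2); rewrite divrK //; congr (_, _).
  by rewrite u1_eq0 mulr0 -[a1](mulKr u2_unit) -det0 u1_eq0 mul0r mulr0.
exists (a1 / u1); rewrite divrK ?Zp_unit //; congr (_, _).
by rewrite -[a2](mulKr (Zp_unit u1_neq0)) det0; ring.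
Qed.

Lemma exists_large_parallel_class (T : finType) (A : {set T})
    (f : T -> 'Z_r * 'Z_r) (u : 'Z_r * 'Z_r) m :
  u != 0 -> (r * m < #|A|)%N ->
  exists C : {set T}, [/\ C \subset A, (m < #|C|)%N &
    {in C &, forall x y, exists c, f x - f y = scale2 c u}].
Proof.
rewrite -card_Zp_type => u_neq0.
case/(exists_large_fiber (fun x => det2 u (f x))) => d fiber_d.
exists [set x in A | det2 u (f x) == d]; split => //.
  by apply/subsetP => x; rewrite inE => /andP[].
move=> x y; rewrite !inE => /andP[_ /eqP det_x] /andP[_ /eqP det_y].
by apply: det2_eq0_scale2 u_neq0 _; rewrite det2B det_x det_y subrr.
Qed.

End PlaneOverZp.

Lemma chiS_scale2_eq0 p q (S : {set Gp p q}) a b (c : 'Z_p) (d : 'Z_q) :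
  prime p -> prime q -> p != q -> c != 0 -> d != 0 ->
  chiS ((a, b) : Gp p q) S = 0 -> chiS ((scale2 c a, scale2 d b) : Gp p q) S = 0.
Proof.
move=> p_prime q_prime p_neq_q c_neq0 d_neq0.
have co_pq : coprime p q by rewrite prime_coprime // dvdn_prime2.
set k := chinese p q (val c) (val d).
have k_p : k = val c %[mod p] := chinese_modl co_pq _ _.
have k_q : k = val d %[mod q] := chinese_modr co_pq _ _.
have co_k : coprime k (p * q).
  rewrite coprimeMr -(coprime_modl k p) -(coprime_modl k q) k_p k_q !coprime_modl.
  by rewrite !Zp_val_coprime.
rewrite (scale2_mulrn p_prime _ k_p) (scale2_mulrn q_prime _ k_q).
have -> : ((a *+ k, b *+ k) : Gp p q) = (a, b) *+ k by rewrite [RHS]pairMnE.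
exact: (chiS_mulrn_eq0 (prime_gt1 p_prime) (prime_gt1 q_prime) (w := (a, b)) co_k).
Qed.

Lemma chiS_0l_eq0_of_large_set p q (S : {set Gp p q}) (B : {set 'Z_q * 'Z_q}) :
  prime p -> prime q -> p != q -> (q < #|B|)%N ->
  {in B &, forall b b', b != b' -> chiS ((0, b - b') : Gp p q) S = 0} ->
  forall e, e != 0 -> chiS ((0, e) : Gp p q) S = 0.
Proof.
move=> p_prime q_prime p_neq_q; rewrite -[X in (X < _)%N]muln1.
move=> B_large chiS_B e e_neq0.
have [C [/subsetP C_B C_large C_par]] :=
  exists_large_parallel_class q_prime id e_neq0 B_large.
have [b [b' [b_C b'_C b_neq_b']]] := card_gt1P C_large.
have [t Dt] := C_par _ _ b_C b'_C.
have t_neq0 : t != 0.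
  by apply: contra b_neq_b' => /eqP t0; rewrite -subr_eq0 Dt t0 /scale2 !mul0r.
have := chiS_B _ _ (C_B _ b_C) (C_B _ b'_C) b_neq_b'.
rewrite Dt => /(chiS_scale2_eq0 (d := t^-1) p_prime q_prime p_neq_q (oner_neq0 _)).
by rewrite invr_eq0 scale2_1 scale2K // => ->.
Qed.

Lemma dvdn_card_of_large_Zq_fiber p q (S C : {set Gp p q}) :
  prime p -> prime q -> p != q -> (q < #|C|)%N ->
  {in C &, forall l l', l.1 = l'.1} ->
  {in C &, forall l l', l != l' -> chiS (l - l') S = 0} ->
  (q ^ 2 %| #|S|)%N.
Proof.
move=> p_prime q_prime p_neq_q C_large C1_const chiS_C.
have C2_inj : {in C &, injective snd}.
  move=> l l' l_C l'_C; move: (C1_const _ _ l_C l'_C).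
  by case: l l' {l_C l'_C} => [? ?] [? ?] /= -> ->.
apply: (vanishing_chiS_Zq_dvdn_card (prime_gt1 q_prime)).
apply: (chiS_0l_eq0_of_large_set (B := snd @: C)) => //; first by rewrite card_in_imset.
move=> _ _ /imsetP[l l_C ->] /imsetP[l' l'_C ->] l2_neq.
have l_neq : l != l' by apply: contra l2_neq => /eqP ->.
have := chiS_C _ _ l_C l'_C l_neq.
by rewrite -[l - l']/(l.1 - l'.1, l.2 - l'.2) (C1_const _ _ l_C l'_C) subrr.
Qed.

Lemma exists_chiS_eq0_l p q (S : {set Gp p q}) :
  prime p -> prime q -> p != q -> spectral S ->
  ~~ (q ^ 2 %| #|S|)%N -> (p * q < #|S|)%N ->
  forall u : 'Z_p * 'Z_p, u != 0 ->
    exists x : 'Z_q * 'Z_q, chiS ((u, x) : Gp p q) S = 0.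
Proof.
move=> p_prime q_prime p_neq_q [L [card_L chiS_L]] q2_ndvd S_large u u_neq0.
rewrite -card_L in S_large.
have [C [/subsetP C_L C_large C_par]] :=
  exists_large_parallel_class p_prime fst u_neq0 S_large.
have chiS_C : {in C &, forall l l', l != l' -> chiS (l - l') S = 0}.
  by move=> l l' l_C l'_C; apply: chiS_L; apply: C_L.
have [|C1_const] := boolP [exists l in C, exists l' in C, l.1 != l'.1]; last first.
  case/negP: q2_ndvd.
  apply: (dvdn_card_of_large_Zq_fiber p_prime q_prime p_neq_q C_large _ chiS_C).
  move=> l l' l_C l'_C; apply/eqP.
  by move/exists_inPn/(_ _ l_C)/exists_inPn/(_ _ l'_C)/negbNE: C1_const.
case/exists_inP=> l l_C /exists_inP[l' l'_C l1_neq].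
have [c Dc] := C_par _ _ l_C l'_C.
have c_neq0 : c != 0.
  by apply: contra l1_neq => /eqP c0; rewrite -subr_eq0 Dc c0 /scale2 !mul0r.
have l_neq : l != l' by apply: contra l1_neq => /eqP ->.
have := chiS_C _ _ l_C l'_C l_neq.
rewrite -[l - l']/(l.1 - l'.1, l.2 - l'.2) Dc.
move/(chiS_scale2_eq0 (c := c^-1) p_prime q_prime p_neq_q _ (oner_neq0 _)).
by rewrite invr_eq0 scale2K // scale2_1 => /(_ c_neq0); exists (l.2 - l'.2).
Qed.

Definition swapG {p q} (g : Gp p q) : Gp q p := (g.2, g.1).

Lemma swapGK p q : cancel (@swapG p q) (@swapG q p).
Proof. by case. Qed.

Lemma swapG_inj p q : injective (@swapG p q).
Proof. exact: can_inj (@swapGK p q). Qed.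

Lemma card_swapG p q (S : {set Gp p q}) : #|swapG @: S| = #|S|.
Proof. exact/card_imset/swapG_inj. Qed.

Lemma chiS_swap p q (w : Gp p q) (S : {set Gp p q}) :
  chiS (swapG w) (swapG @: S) = chiS w S.
Proof.
rewrite /chiS big_imset /=; last exact: in2W (@swapG_inj p q).
by apply: eq_bigr => s _; rewrite /chi addrC.
Qed.

Lemma spectral_swap p q (S : {set Gp p q}) : spectral S -> spectral (swapG @: S).
Proof.
move=> [L [card_L chiS_L]]; exists (swapG @: L); split; first by rewrite !card_swapG.
move=> _ _ /imsetP[l l_L ->] /imsetP[l' l'_L ->] swap_neq.
rewrite -[swapG l - swapG l']/(swapG (l - l')) chiS_swap chiS_L //.
by apply: contra swap_neq => /eqP ->.
Qed.

Lemma sqr_ndvdn_of_gcdn p q n : prime p -> prime q -> p != q ->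
  gcdn n (p ^ 2 * q ^ 2) = (p * q)%N -> ~~ (q ^ 2 %| n)%N.
Proof.
move=> p_prime q_prime p_neq_q gcd_n; apply/negP => q2_dvd.
have : (q ^ 2 %| p * q)%N by rewrite -gcd_n dvdn_gcd q2_dvd dvdn_mull.
rewrite expnS expn1 dvdn_pmul2r ?prime_gt0 // dvdn_prime2 //.
by rewrite eq_sym (negbTE p_neq_q).
Qed.

Theorem lemma4p6 (p q : nat) (S : {set Gp p q}) :
  prime p -> prime q -> p != q ->
  spectral S ->
  gcdn #|S| (p ^ 2 * q ^ 2) = (p * q)%N ->
  (p * q < #|S|)%N -> (#|S| < p * q * minn p q)%N ->
  (forall u : 'Z_p * 'Z_p, u != 0 ->
     exists x : 'Z_q * 'Z_q, chiS ((u, x) : Gp p q) S = 0) /\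
  (forall v : 'Z_q * 'Z_q, v != 0 ->
     exists y : 'Z_p * 'Z_p, chiS ((y, v) : Gp p q) S = 0).
Proof.
move=> p_prime q_prime p_neq_q S_spectral gcd_S S_large _.
have q_neq_p : q != p by rewrite eq_sym.
split=> [|v v_neq0].
  exact: exists_chiS_eq0_l (sqr_ndvdn_of_gcdn p_prime q_prime p_neq_q gcd_S) S_large.
have [||y chiS_y] := exists_chiS_eq0_l q_prime p_prime q_neq_p
  (spectral_swap S_spectral) _ _ v_neq0; rewrite ?card_swapG.
- by apply: (sqr_ndvdn_of_gcdn q_prime p_prime q_neq_p); rewrite mulnC gcd_S mulnC.
- by rewrite mulnC.
by exists y; rewrite -chiS_swap.
Qed.
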